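(* Let $(M,\Delta,S,\varepsilon)$ be a weak Kac algebra. Then $(M,\Delta,S)$ is a generalized counital $C^*$-bialgebra, i.e. the map $\varepsilon_t=\mu(\mathrm{id}\otimes S)\Delta$ satisfies: (1) $\varepsilon_t(1)=1$; (2) $\varepsilon_t(M)\subset N_t$; (3) $(\mathrm{id}\otimes\varepsilon_t)\Delta(x)=e(x\otimes 1)$ for all $x\in N_s$.
   Context: All algebras are finite-dimensional over $\mathbb{C}$; $\varsigma$ denotes the flip $x\otimes y\mapsto y\otimes x$ and $\mu(x\otimes y)=xy$. A weak Kac algebra is a quadruple $(M,\Delta,S,\varepsilon)$ where $M$ is a finite-dimensional $C^*$-algebra; $\Delta:M\to M\otimes M$ is an injective, not necessarily unital, $*$-homomorphism with $(\Delta\otimes\mathrm{id})\Delta=(\mathrm{id}\otimes\Delta)\Delta$; $S:M\to M$ is a linear, unital, antimultiplicative, $*$-preserving bijection with $S^2=\mathrm{id}$ and $(S\otimes S)\circ\Delta=\varsigma\circ\Delta\circ S$; and $\varepsilon:M\to\mathbb{C}$ is linear with $(\varepsilon\otimes\mathrm{id})\Delta=(\mathrm{id}\otimes\varepsilon)\Delta=\mathrm{id}$, $\varepsilon\circ S=\varepsilon$, $\varepsilon(x^* )=\overline{\varepsilon(x)}$, $(\varepsilon\otimes\varepsilon)((x\otimes1)e(1\otimes y))=\varepsilon(xy)$ for all $x,y$, where $e:=\Delta(1)$, and $(\varepsilon_s\otimes\mathrm{id})\Delta(x)=(1\otimes x)e$ for all $x$, where $\varepsilon_s:=\mu(S\otimes\mathrm{id})\Delta$.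 The target and source Cartan subalgebras are $N_t=\{x\in M:\Delta(x)=e(x\otimes 1)=(x\otimes1)e\}$ and $N_s=\{x\in M:\Delta(x)=e(1\otimes x)=(1\otimes x)e\}$. *)

(* Weak Kac algebras realised concretely: a finite-dimensional
   C*-algebra M is a unital *-subalgebra of the matrix algebra 'M[C]_n,
   C = R[i] (R : realType, i.e. C is the field of complex numbers),
   M (x) M is the span of the Kronecker products a *t b (a, b in M) inside
   'M[C]_(n * n), and linear maps are linear maps on the ambient matrix
   spaces (arbitrary linear extensions; all axioms are only imposed on M). *)
From HB Require Import structures.
From mathcomp Require Import all_boot all_algebra.
From mathcomp Require Import reals.
From mathcomp Require Import complex mxtens.

Set Implicit Arguments.
Unset Strict Implicit.
Unset Printing Implicit Defensive.

Import GRing.Theory Num.Theory.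
Local Open Scope ring_scope.

Section WeakKac.
Variables (R : realType) (n : nat).
Local Notation C := (R[i]).
Local Notation Mn := 'M[C]_n.
Local Notation MMn := 'M[C]_(n * n).

Definition mxadj {p} (A : 'M[C]_p) : 'M[C]_p := (map_mx (@conjc R) A)^T.

Definition Cstar_subalg (M : {pred Mn}) : Prop :=
  [/\ 1%:M \in M,
      {in M &, forall x y, x + y \in M},
      forall (c : C), {in M, forall x, c *: x \in M},
      {in M &, forall x y, x *m y \in M} &
      {in M, forall x, mxadj x \in M}].

Definition in_tens (M : {pred Mn}) (X : MMn) : Prop :=
  exists k (a b : 'I_k -> Mn),
    (forall i, a i \in M /\ b i \in M) /\ X = \sum_(i < k) (a i *t b i).

(* the linear map X |-> sum F a_i b_i on 'M_n (x) 'M_n induced by a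
   bilinear F, computed on the basis of matrix units *)
Definition tens_lift {V : lmodType C} (F : Mn -> Mn -> V) (X : MMn) : V :=
  \sum_(i < n) \sum_(j < n) \sum_(k < n) \sum_(l < n)
     X (mxtens_index (i, k)) (mxtens_index (j, l))
       *: F (delta_mx i j) (delta_mx k l).

Definition tmap (f g : Mn -> Mn) : MMn -> MMn :=
  tens_lift (fun a b => f a *t g b).
Definition tflip : MMn -> MMn := tens_lift (fun a b => b *t a).
Definition tmul : MMn -> Mn := tens_lift (fun a b => a *m b).
Definition slice_l (phi : Mn -> C) : MMn -> Mn :=
  tens_lift (fun a b => phi a *: b).
Definition slice_r (phi : Mn -> C) : MMn -> Mn :=
  tens_lift (fun a b => phi b *: a).
Definition tfun (phi psi : Mn -> C) : MMn -> C^o :=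
  tens_lift (fun a b => (phi a * psi b : C^o)).

Variables (Delta : {linear Mn -> MMn}) (S : {linear Mn -> Mn})
          (eps : {linear Mn -> C^o}).

Definition e_unit : MMn := Delta 1%:M.
Definition eps_t (x : Mn) : Mn := tmul (tmap id S (Delta x)).
Definition eps_s (x : Mn) : Mn := tmul (tmap S id (Delta x)).

Definition Delta_id (X : MMn) : 'M[C]_(n * n * n) :=
  tens_lift (fun a b => Delta a *t b) X.
Definition id_Delta (X : MMn) : 'M[C]_(n * n * n) :=
  castmx (mulnA n n n, mulnA n n n) (tens_lift (fun a b => a *t Delta b) X).

Definition in_Nt (M : {pred Mn}) (x : Mn) : Prop :=
  [/\ x \in M, Delta x = e_unit *m (x *t (1%:M : Mn))
             & Delta x = (x *t (1%:M : Mn)) *m e_unit].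
Definition in_Ns (M : {pred Mn}) (x : Mn) : Prop :=
  [/\ x \in M, Delta x = e_unit *m ((1%:M : Mn) *t x)
             & Delta x = ((1%:M : Mn) *t x) *m e_unit].

Record weak_Kac_algebra (M : {pred Mn}) : Prop := WeakKac {
  wk_Cstar : Cstar_subalg M;
  wk_Delta_tens : {in M, forall x, in_tens M (Delta x)};
  wk_Delta_mul : {in M &, forall x y, Delta (x *m y) = Delta x *m Delta y};
  wk_Delta_adj : {in M, forall x, Delta (mxadj x) = mxadj (Delta x)};
  wk_Delta_inj : {in M &, injective Delta};
  wk_coassoc : {in M, forall x, Delta_id (Delta x) = id_Delta (Delta x)};
  wk_S_in : {in M, forall x, S x \in M};
  wk_S_inj : {in M &, injective S};
  wk_S_surj : {in M, forall y, exists2 x, x \in M & S x = y};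
  wk_S_unit : S 1%:M = 1%:M;
  wk_S_mul : {in M &, forall x y, S (x *m y) = S y *m S x};
  wk_S_adj : {in M, forall x, S (mxadj x) = mxadj (S x)};
  wk_S_invol : {in M, forall x, S (S x) = x};
  wk_S_Delta : {in M, forall x, tmap S S (Delta x) = tflip (Delta (S x))};
  wk_eps_l : {in M, forall x, slice_l eps (Delta x) = x};
  wk_eps_r : {in M, forall x, slice_r eps (Delta x) = x};
  wk_eps_S : {in M, forall x, eps (S x) = eps x};
  wk_eps_adj : {in M, forall x, eps (mxadj x) = conjc (eps x)};
  wk_eps_mul : {in M &, forall x y,
    tfun eps eps ((x *t (1%:M : Mn)) *m e_unit *m ((1%:M : Mn) *t y))
    = eps (x *m y)};
  wk_eps_s : {in M, forall x,
    tmap eps_s id (Delta x) = ((1%:M : Mn) *t x) *m e_unit}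
}.

End WeakKac.

(* ε_s(1) = 1 is read off the axiom (ε_s ⊗ id)Δ(1) = e by slicing with ε, and
   ε_t = S ∘ ε_s ∘ S because Δ ∘ S = ς(S ⊗ S)Δ and S² = id.  The map ς(S ⊗ S)
   is antimultiplicative on M ⊗ M, fixes e, sends Δz to Δ(Sz) and intertwines
   ε_s ⊗ id with id ⊗ ε_t; applied to the axiom (ε_s ⊗ id)Δ(z) = (1 ⊗ z)e it
   gives (id ⊗ ε_t)Δ(y) = e(y ⊗ 1) for every y ∈ M, not only on N_s.  Together
   with coassociativity this yields
     Δ(ε_t x) = x₁S(x₄) ⊗ x₂S(x₃) = x₁S(x₃) ⊗ ε_t(x₂) = e(ε_t(x) ⊗ 1),
   and (ε_t(x) ⊗ 1)e is obtained by taking adjoints, since ε_t(x)† = ε_t(S(x†))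
   and e† = e. *)

From HB Require Import structures.
From mathcomp Require Import all_boot all_algebra.
From mathcomp Require Import reals.
From mathcomp Require Import complex mxtens.
Import GRing.Theory.
Local Open Scope ring_scope.
Set Implicit Arguments.
Unset Strict Implicit.
Unset Printing Implicit Defensive.

Local Notation bilinear F := (bilinear_for *:%R *:%R F).

Section RawLinear.
Variables (K : pzRingType) (U V : lmodType K) (f : U -> V).
Hypothesis f_lin : linear f.

Let fL : {linear U -> V} := HB.pack f (GRing.isLinear.Build K U V *:%R f f_lin).

Lemma raw_linearZ a u : f (a *: u) = a *: f u.
Proof. exact: (linearZ_LR fL). Qed.

Lemma raw_linear_sum I r (P : pred I) (F : I -> U) :
  f (\sum_(i <- r | P i) F i) = \sum_(i <- r | P i) f (F i).
Proof. exact: (linear_sum fL). Qed.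

End RawLinear.

Section TensorLift.
Variable K : comNzRingType.

Lemma tensmxPl m m' p p' (c : K) (A B : 'M[K]_(m, m')) (X : 'M[K]_(p, p')) :
  (c *: A + B) *t X = c *: (A *t X) + B *t X.
Proof. by apply/matrixP => r s; rewrite !mxE mulrDl mulrA. Qed.

Lemma tensmxPr m m' p p' (c : K) (A B : 'M[K]_(m, m')) (X : 'M[K]_(p, p')) :
  X *t (c *: A + B) = c *: (X *t A) + X *t B.
Proof. by apply/matrixP => r s; rewrite !mxE mulrDr mulrCA. Qed.

Lemma mulmxPl m m' p (c : K) (A B : 'M[K]_(m, m')) (X : 'M[K]_(m', p)) :
  (c *: A + B) *m X = c *: (A *m X) + B *m X.
Proof. by rewrite mulmxDl scalemxAl. Qed.

Lemma mulmxPr m m' p (c : K) (A B : 'M[K]_(m', p)) (X : 'M[K]_(m, m')) :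
  X *m (c *: A + B) = c *: (X *m A) + X *m B.
Proof. by rewrite mulmxDr scalemxAr. Qed.

Lemma castmxP m n m' n' (eq_mn : (m = m') * (n = n')) (c : K) (A B : 'M[K]_(m, n)) :
  castmx eq_mn (c *: A + B) = c *: castmx eq_mn A + castmx eq_mn B.
Proof. by apply/matrixP => i j; rewrite !(castmxE, mxE). Qed.

Lemma tensmxA m n p m' n' p' (A : 'M[K]_(m, m')) (B : 'M[K]_(n, n'))
    (D : 'M[K]_(p, p')) :
  castmx (mulnA m n p, mulnA m' n' p') (A *t (B *t D)) = (A *t B) *t D.
Proof.
have cast_index a b c (i : 'I_a) (j : 'I_b) (k : 'I_c) :
    cast_ord (esym (mulnA a b c)) (mxtens_index (mxtens_index (i, j), k))
    = mxtens_index (i, mxtens_index (j, k)).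
  by apply: val_inj; rewrite /= mulnDl -mulnA addnA.
apply/matrixP => r s.
case: (mxtens_indexP r) => r0 r2; case: (mxtens_indexP r0) => r00 r01.
case: (mxtens_indexP s) => s0 s2; case: (mxtens_indexP s0) => s00 s01.
by rewrite castmxE !cast_index !tensmxE mulrA.
Qed.

Lemma tens_delta_mx p q (i j : 'I_p) (k l : 'I_q) :
  delta_mx i j *t delta_mx k l
  = delta_mx (mxtens_index (i, k)) (mxtens_index (j, l)) :> 'M[K]_(p * q).
Proof.
apply/matrixP => r s.
case: (mxtens_indexP r) => a b; case: (mxtens_indexP s) => c d.
rewrite tensmxE !mxE !(inj_eq (can_inj (@mxtens_indexK _ _))) !xpair_eqE.
by rewrite -natrM mulnb andbACA.
Qed.

Lemma tensmx11 m : (1%:M : 'M[K]_m) *t (1%:M : 'M[K]_m) = 1%:M.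
Proof.
apply/matrixP => r s.
case: (mxtens_indexP r) => a b; case: (mxtens_indexP s) => c d.
rewrite tensmxE !mxE !(inj_eq (can_inj (@mxtens_indexK _ _))) !xpair_eqE.
by rewrite -natrM mulnb.
Qed.

Lemma sum_mxtens_index p q (V : nmodType) (f : 'I_(p * q) -> V) :
  \sum_(i < p) \sum_(k < q) f (mxtens_index (i, k)) = \sum_r f r.
Proof.
rewrite pair_big [RHS](reindex (@mxtens_index p q)) /=.
  by apply: eq_bigr => -[a b] _.
by exists (@mxtens_unindex p q) => x _; rewrite ?mxtens_indexK ?mxtens_unindexK.
Qed.

(* [tens_lift] of the definitions is the case p = q = n. *)
Definition mxtens_lift {p q} {V : lmodType K} (F : 'M[K]_p -> 'M[K]_q -> V)
    (X : 'M[K]_(p * q)) : V :=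
  \sum_(i < p) \sum_(j < p) \sum_(k < q) \sum_(l < q)
     X (mxtens_index (i, k)) (mxtens_index (j, l))
       *: F (delta_mx i j) (delta_mx k l).

Section Lift.
Variables (p q : nat) (V : lmodType K).
Implicit Types (F G H : 'M[K]_p -> 'M[K]_q -> V) (X : 'M[K]_(p * q)).

Lemma mxtens_lift_is_linear F : linear (mxtens_lift F).
Proof.
move=> c X Y; rewrite /mxtens_lift.
do 4!(rewrite scaler_sumr -big_split; apply: eq_bigr => ? _).
by rewrite !mxE scalerDl scalerA.
Qed.

HB.instance Definition _ F :=
  GRing.isLinear.Build K 'M[K]_(p * q) V *:%R (mxtens_lift F)
    (mxtens_lift_is_linear F).

Lemma eq_mxtens_lift F G X : F =2 G -> mxtens_lift F X = mxtens_lift G X.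
Proof.
by move=> eqFG; rewrite /mxtens_lift; do 4!(apply: eq_bigr => ? _); rewrite eqFG.
Qed.

Lemma mxtens_lift_linearF F G H c X : (forall a b, F a b = c *: G a b + H a b) ->
  mxtens_lift F X = c *: mxtens_lift G X + mxtens_lift H X.
Proof.
move=> eqF; rewrite /mxtens_lift.
do 4!(rewrite scaler_sumr -big_split; apply: eq_bigr => ? _).
by rewrite eqF scalerDr !scalerA mulrC.
Qed.

Lemma linear_mxtens_lift (W : lmodType K) (h : V -> W) F X : linear h ->
  h (mxtens_lift F X) = mxtens_lift (fun a b => h (F a b)) X.
Proof.
move=> h_lin; rewrite /mxtens_lift.
by do 4!(rewrite raw_linear_sum //; apply: eq_bigr => ? _); apply: raw_linearZ.
Qed.

Lemma linear_sum_delta m (W : lmodType K) (f : 'M[K]_m -> W) A : linear f ->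
  f A = \sum_(i < m) \sum_(j < m) A i j *: f (delta_mx i j).
Proof.
move=> f_lin; rewrite {1}(matrix_sum_delta A) raw_linear_sum //.
apply: eq_bigr => i _; rewrite raw_linear_sum //.
by apply: eq_bigr => j _; apply: raw_linearZ.
Qed.

Lemma mxtens_lift_tens F A B : bilinear F -> mxtens_lift F (A *t B) = F A B.
Proof.
case=> linFl linFr; rewrite (linear_sum_delta A (linFl B)) /mxtens_lift.
apply: eq_bigr => i _; apply: eq_bigr => j _.
rewrite (linear_sum_delta B (linFr _)) scaler_sumr; apply: eq_bigr => k _.
by rewrite scaler_sumr; apply: eq_bigr => l _; rewrite tensmxE scalerA.
Qed.

Lemma mxtens_lift_id X : mxtens_lift (@tensmx K p p q q) X = X.
Proof.
rewrite {2}(matrix_sum_delta X) /mxtens_lift.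
transitivity (\sum_(i < p) \sum_(k < q) \sum_(j < p) \sum_(l < q)
   X (mxtens_index (i, k)) (mxtens_index (j, l)) *:
     delta_mx (mxtens_index (i, k)) (mxtens_index (j, l)) : 'M[K]_(p * q)).
  apply: eq_bigr => i _; rewrite exchange_big; apply: eq_bigr => k _.
  by apply: eq_bigr => j _; apply: eq_bigr => l _; rewrite tens_delta_mx.
rewrite (sum_mxtens_index (fun r => \sum_(j < p) \sum_(l < q)
   X r (mxtens_index (j, l)) *: delta_mx r (mxtens_index (j, l)))).
by apply: eq_bigr => r _; rewrite (sum_mxtens_index (fun s => X r s *: delta_mx r s)).
Qed.

Lemma mxtens_lift_sum F k (a : 'I_k -> 'M[K]_p) (b : 'I_k -> 'M[K]_q) :
  bilinear F -> mxtens_lift F (\sum_(i < k) a i *t b i) = \sum_(i < k) F (a i) (b i).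
Proof.
by move=> linF; rewrite linear_sum /=; apply: eq_bigr => i _; rewrite mxtens_lift_tens.
Qed.

End Lift.

Section Lift3.
Variables (p q r : nat) (V : lmodType K).
Variable Phi : 'M[K]_p -> 'M[K]_q -> 'M[K]_r -> V.

Definition trilinear := [/\ forall v w, linear (fun u => Phi u v w),
  forall u w, linear (fun v => Phi u v w) & forall u v, linear (Phi u v)].

Definition mxtens_lift3 : 'M[K]_(p * q * r) -> V :=
  mxtens_lift (fun U w => mxtens_lift (fun u v => Phi u v w) U).

Lemma mxtens_lift3_tens U W : (forall u v, linear (Phi u v)) ->
  mxtens_lift3 (U *t W) = mxtens_lift (fun u v => Phi u v W) U.
Proof.
move=> linPhi; apply: mxtens_lift_tens; split=> [W' | U'] c X Y.
  exact: linearP.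
by apply: mxtens_lift_linearF => u v; rewrite linPhi.
Qed.

Lemma mxtens_lift3_cast_tens A Y : trilinear ->
  mxtens_lift3 (castmx (mulnA p q r, mulnA p q r) (A *t Y))
  = mxtens_lift (Phi A) Y.
Proof.
case=> lin1 lin2 lin3; rewrite -{1}(mxtens_lift_id Y).
rewrite (linear_mxtens_lift
  (h := fun Z => mxtens_lift3 (castmx (mulnA p q r, mulnA p q r) (A *t Z)))); last first.
  by move=> c X Z; rewrite tensmxPr castmxP /mxtens_lift3 linearP.
apply: eq_mxtens_lift => v w; rewrite tensmxA mxtens_lift3_tens //.
by apply: mxtens_lift_tens; split=> [? | ?] ? ? ?; rewrite ?lin1 ?lin2.
Qed.

End Lift3.
End TensorLift.

Ltac linear_step := first
  [ apply: mxtens_lift_linearF => ? ?; cbv beta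
  | progress rewrite ?linearP ?mulmxPl ?mulmxPr ?tensmxPl ?tensmxPr ?scalerDr ?scalerA ].
Ltac bilinear_tac := split=> [?|?] ? ? ?; cbv beta; repeat linear_step; done.
Ltac trilinear_tac := split=> [? ?|? ?|? ?] ? ? ?; cbv beta; repeat linear_step; done.

Section Adjoint.
Variable R : realType.

Lemma mxadjD p (A B : 'M[R[i]]_p) : mxadj (A + B) = mxadj A + mxadj B.
Proof. by apply/matrixP => i j; rewrite !mxE rmorphD. Qed.

Lemma mxadj0 p : mxadj (0 : 'M[R[i]]_p) = 0.
Proof. by apply/matrixP => i j; rewrite !mxE rmorph0. Qed.

Lemma mxadj_sum p k (F : 'I_k -> 'M[R[i]]_p) :
  mxadj (\sum_(i < k) F i) = \sum_(i < k) mxadj (F i).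
Proof. exact: (big_morph _ (@mxadjD p) (@mxadj0 p)). Qed.

Lemma mxadjM p (A B : 'M[R[i]]_p) : mxadj (A *m B) = mxadj B *m mxadj A.
Proof. by rewrite /mxadj map_mxM trmx_mul. Qed.

Lemma mxadj_tens p q (A : 'M[R[i]]_p) (B : 'M[R[i]]_q) :
  mxadj (A *t B) = mxadj A *t mxadj B.
Proof. by rewrite /mxadj map_mxT trmx_tens. Qed.

Lemma mxadj1 p : mxadj (1%:M : 'M[R[i]]_p) = 1%:M.
Proof. by rewrite /mxadj map_mx1 trmx1. Qed.

Lemma mxadjK p (A : 'M[R[i]]_p) : mxadj (mxadj A) = A.
Proof. by apply/matrixP => i j; rewrite !mxE conjcK. Qed.

End Adjoint.

Section AlgebraicTensor.
Variables (R : realType) (n : nat) (M : {pred 'M[R[i]]_n}).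
Local Notation MMn := 'M[R[i]]_(n * n).

Lemma in_tens_tens a b : a \in M -> b \in M -> in_tens M (a *t b).
Proof.
move=> aM bM; exists 1%N, (fun=> a), (fun=> b).
by split=> [// | ]; rewrite big_ord1.
Qed.

Lemma eq_linear_in_tens (V : lmodType R[i]) (f g : MMn -> V) :
  linear f -> linear g -> {in M &, forall a b, f (a *t b) = g (a *t b)} ->
  forall X, in_tens M X -> f X = g X.
Proof.
move=> f_lin g_lin eq_fg X [k [a [b [abM ->]]]].
rewrite !raw_linear_sum //; apply: eq_bigr => i _.
by have [aM bM] := abM i; apply: eq_fg.
Qed.

Lemma eq_mxtens_lift_in (V : lmodType R[i]) (F G : 'M_n -> 'M_n -> V) X :
  in_tens M X -> bilinear F -> bilinear G -> {in M &, F =2 G} ->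
  mxtens_lift F X = mxtens_lift G X.
Proof.
move=> MX linF linG eqFG; apply: (eq_linear_in_tens _ _ _ MX); try exact: linearP.
by move=> a b aM bM; rewrite !mxtens_lift_tens // eqFG.
Qed.

End AlgebraicTensor.

Section WeakKacAlgebra.
Variables (R : realType) (n : nat) (M : {pred 'M[R[i]]_n}).
Variables (Delta : {linear 'M[R[i]]_n -> 'M[R[i]]_(n * n)})
  (S : {linear 'M[R[i]]_n -> 'M[R[i]]_n}) (eps : {linear 'M[R[i]]_n -> R[i]^o}).
Hypothesis WK : weak_Kac_algebra Delta S eps M.

Local Notation C := R[i].
Local Notation Mn := 'M[C]_n.
Local Notation MMn := 'M[C]_(n * n).
Local Notation e := (e_unit Delta).
Local Notation et := (eps_t Delta S).
Local Notation es := (eps_s Delta S).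
(* [sweedler F x] is the Sweedler sum Σ F x₁ x₂, and [flipSS] is ς(S ⊗ S). *)
Local Notation sweedler F x := (mxtens_lift F (Delta x)).
Local Notation flipSS := (mxtens_lift (fun a b : Mn => S b *t S a)).
Implicit Types (a b x y : Mn) (X Y : MMn).

Lemma mem1 : 1%:M \in M. Proof. by case: (wk_Cstar WK). Qed.
Lemma memM : {in M &, forall x y, x *m y \in M}. Proof. by case: (wk_Cstar WK). Qed.
Lemma mem_adj : {in M, forall x, mxadj x \in M}. Proof. by case: (wk_Cstar WK). Qed.
Lemma memS x : x \in M -> S x \in M. Proof. exact: (wk_S_in WK). Qed.

Lemma mem_sum k (F : 'I_k -> Mn) : (forall i, F i \in M) -> \sum_(i < k) F i \in M.
Proof.
have [_ memD memZ _ _] := wk_Cstar WK; move=> MF; elim/big_ind: _ => //.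
by rewrite -(scale0r 1%:M) memZ // mem1.
Qed.

Lemma in_tens_Delta x : x \in M -> in_tens M (Delta x).
Proof. exact: (wk_Delta_tens WK). Qed.

Lemma eq_sweedler x (V : lmodType C) (F G : Mn -> Mn -> V) :
  x \in M -> bilinear F -> bilinear G -> {in M &, F =2 G} ->
  sweedler F x = sweedler G x.
Proof. by move/in_tens_Delta; apply: eq_mxtens_lift_in. Qed.

Lemma Delta_idE X : Delta_id Delta X = mxtens_lift (fun a b => Delta a *t b) X.
Proof. by []. Qed.
Lemma id_DeltaE X : id_Delta Delta X
  = castmx (mulnA n n n, mulnA n n n) (mxtens_lift (fun a b => a *t Delta b) X).
Proof. by []. Qed.
Lemma tmapE (f g : Mn -> Mn) X : tmap f g X = mxtens_lift (fun a b => f a *t g b) X.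
Proof. by []. Qed.
Lemma tflipE X : tflip X = mxtens_lift (fun a b => b *t a) X.
Proof. by []. Qed.
Lemma slice_rE (phi : Mn -> C) X :
  slice_r phi X = mxtens_lift (fun a b => phi b *: a) X.
Proof. by []. Qed.
Lemma tmulE X : tmul X = mxtens_lift (fun a b => a *m b) X.
Proof. by []. Qed.

Lemma sweedler_coassoc x (V : lmodType C) (Phi : Mn -> Mn -> Mn -> V) :
  x \in M -> trilinear Phi ->
  sweedler (fun u w => sweedler (fun u1 u2 => Phi u1 u2 w) u) x
  = sweedler (fun u w => sweedler (fun w1 w2 => Phi u w1 w2) w) x.
Proof.
move=> xM linPhi; have [_ _ lin3] := linPhi.
transitivity (mxtens_lift3 Phi (Delta_id Delta (Delta x))).
  rewrite Delta_idE (linear_mxtens_lift (h := mxtens_lift3 Phi)); last exact: linearP.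
  by apply: eq_mxtens_lift => a b; rewrite mxtens_lift3_tens.
rewrite (wk_coassoc WK xM) id_DeltaE.
rewrite (linear_mxtens_lift (h := fun Y : 'M_(n * (n * n)) =>
  mxtens_lift3 Phi (castmx (mulnA n n n, mulnA n n n) Y))); last first.
  by move=> c Y Z; rewrite castmxP /mxtens_lift3 linearP.
by apply: eq_mxtens_lift => a b; rewrite mxtens_lift3_cast_tens.
Qed.

Lemma tmap_tens (f g : Mn -> Mn) a b : linear f -> linear g ->
  tmap f g (a *t b) = f a *t g b.
Proof.
move=> f_lin g_lin; rewrite tmapE mxtens_lift_tens //.
by split=> [?|?] ? ? ?; rewrite ?f_lin ?g_lin ?tensmxPl ?tensmxPr.
Qed.

Lemma tflip_tens a b : tflip (a *t b) = b *t a.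
Proof. by rewrite tflipE mxtens_lift_tens //; bilinear_tac. Qed.

Lemma tmul_tens a b : tmul (a *t b) = a *m b.
Proof. by rewrite tmulE mxtens_lift_tens //; bilinear_tac. Qed.

Lemma tflipK X : tflip (tflip X) = X.
Proof.
rewrite [tflip X]tflipE tflipE.
rewrite (linear_mxtens_lift (h := mxtens_lift (fun a b : Mn => b *t a))); last first.
  exact: linearP.
rewrite -[RHS]mxtens_lift_id; apply: eq_mxtens_lift => a b.
by rewrite -tflipE tflip_tens.
Qed.

Lemma flipSS_tens a b : flipSS (a *t b) = S b *t S a.
Proof. by rewrite mxtens_lift_tens //; bilinear_tac. Qed.

Lemma Delta_S w : w \in M -> Delta (S w) = flipSS (Delta w).
Proof.
move=> wM; rewrite -[Delta (S w)]tflipK -(wk_S_Delta WK wM) tmapE tflipE.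
rewrite (linear_mxtens_lift (h := mxtens_lift (fun a b : Mn => b *t a))); last first.
  exact: linearP.
by apply: eq_mxtens_lift => a b; rewrite -tflipE tflip_tens.
Qed.

Lemma flipSS_e : flipSS e = e.
Proof. by rewrite -Delta_S ?mem1 // (wk_S_unit WK). Qed.

Lemma flipSS_mul X Y : in_tens M X -> in_tens M Y ->
  flipSS (X *m Y) = flipSS Y *m flipSS X.
Proof.
move=> MX MY; apply: (eq_linear_in_tens (f := fun X => flipSS (X *m Y))
  (g := fun X => flipSS Y *m flipSS X)) MX => [c A B|c A B|a b aM bM].
- by rewrite mulmxPl linearP.
- by rewrite linearP mulmxPr.
apply: (eq_linear_in_tens (f := fun Y => flipSS ((a *t b) *m Y))
  (g := fun Y => flipSS Y *m flipSS (a *t b))) MY => [c A B|c A B|c d cM dM].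
- by rewrite mulmxPr linearP.
- by rewrite linearP mulmxPl.
rewrite (tensmx_mul a b c d) !flipSS_tens.
by rewrite (tensmx_mul (S d) (S c)) !(wk_S_mul WK).
Qed.

Lemma eps_tE x : et x = sweedler (fun a b => a *m S b) x.
Proof.
rewrite /eps_t tmulE tmapE linear_mxtens_lift; last exact: linearP.
by apply: eq_mxtens_lift => a b; rewrite -tmul_tens.
Qed.

Lemma eps_sE x : es x = sweedler (fun a b => S a *m b) x.
Proof.
rewrite /eps_s tmulE tmapE linear_mxtens_lift; last exact: linearP.
by apply: eq_mxtens_lift => a b; rewrite -tmul_tens.
Qed.

Lemma eps_t_is_linear : linear et.
Proof. by move=> c u v; rewrite !eps_tE !linearP. Qed.

Lemma eps_s_is_linear : linear es.
Proof. by move=> c u v; rewrite !eps_sE !linearP. Qed.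

HB.instance Definition _ := GRing.isLinear.Build C Mn Mn *:%R et eps_t_is_linear.
HB.instance Definition _ := GRing.isLinear.Build C Mn Mn *:%R es eps_s_is_linear.

Lemma eps_t_S x : x \in M -> et (S x) = S (es x).
Proof.
move=> xM; rewrite eps_tE Delta_S // eps_sE.
rewrite (linear_mxtens_lift (h := mxtens_lift (fun a b : Mn => a *m S b))); last first.
  exact: linearP.
rewrite (linear_mxtens_lift (h := S)); last exact: linearP.
have bil_mulS : bilinear (fun a b : Mn => a *m S b) by bilinear_tac.
under eq_mxtens_lift do rewrite mxtens_lift_tens //.
apply: (eq_sweedler xM); [bilinear_tac | bilinear_tac | move=> a b aM bM].
by rewrite (wk_S_mul WK) ?memS.
Qed.

Lemma id_eps_t_flipSS X : in_tens M X -> tmap id et (flipSS X) = flipSS (tmap es id X).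
Proof.
have id_lin : linear (@id Mn) by [].
apply: (eq_linear_in_tens (f := fun X => tmap id et (flipSS X))
  (g := fun X => flipSS (tmap es id X))) => [c A B|c A B|a b aM bM].
- by rewrite !tmapE !linearP.
- by rewrite !tmapE !linearP.
have et_lin : linear et by exact: linearP.
have es_lin : linear es by exact: linearP.
rewrite flipSS_tens (tmap_tens _ _ id_lin et_lin) (tmap_tens _ _ es_lin id_lin).
by rewrite flipSS_tens eps_t_S.
Qed.

Lemma id_eps_t_Delta y : y \in M -> tmap id et (Delta y) = e *m (y *t 1%:M).
Proof.
move=> yM; have SyM := memS yM.
rewrite -{1}(wk_S_invol WK yM) (Delta_S SyM) (id_eps_t_flipSS (in_tens_Delta SyM)).
have Me : in_tens M e := in_tens_Delta mem1.
have M1Sy : in_tens M (1%:M *t S y) := in_tens_tens mem1 SyM.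
rewrite (wk_eps_s WK SyM) (flipSS_mul M1Sy Me) flipSS_e flipSS_tens.
by rewrite (wk_S_unit WK) (wk_S_invol WK yM).
Qed.

Lemma eps_s_slice_r X : es (slice_r eps X) = slice_r eps (tmap es id X).
Proof.
rewrite !slice_rE tmapE (linear_mxtens_lift (h := es)); last exact: linearP.
rewrite (linear_mxtens_lift (h := mxtens_lift (fun a b : Mn => eps b *: a))); last first.
  exact: linearP.
apply: eq_mxtens_lift => a b; rewrite linearZ mxtens_lift_tens //.
split=> [b'|a'] c u v; first by rewrite scalerDr scalerA mulrC -scalerA.
by rewrite linearP scalerDl -scalerA.
Qed.

Lemma eps_s1 : es 1%:M = 1%:M.
Proof.
have eps_r1 := wk_eps_r WK mem1.
have := wk_eps_s WK mem1; rewrite tensmx11 mul1mx /e_unit => eps_s_Delta1.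
by rewrite -{1}eps_r1 eps_s_slice_r eps_s_Delta1 eps_r1.
Qed.

Lemma eps_t1 : et 1%:M = 1%:M.
Proof. by rewrite -{1}(wk_S_unit WK) eps_t_S ?mem1 // eps_s1 (wk_S_unit WK). Qed.

Lemma eps_t_mem x : x \in M -> et x \in M.
Proof.
move=> xM; rewrite eps_tE; have [k [a [b [abM ->]]]] := in_tens_Delta xM.
rewrite mxtens_lift_sum; last by bilinear_tac.
by apply: mem_sum => i; have [aM bM] := abM i; rewrite memM ?memS.
Qed.

Lemma sweedler_mul_Delta_S u w : u \in M -> w \in M ->
  sweedler (fun w1 w2 => (u *t w1) *m Delta (S w2)) w
  = sweedler (fun w1 w2 => (u *m S w2) *t et w1) w.
Proof.
move=> uM wM.
transitivity (sweedler (fun w1 w2 =>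
    sweedler (fun p q => (u *m S q) *t (w1 *m S p)) w2) w).
  apply: (eq_sweedler wM); [bilinear_tac | bilinear_tac | move=> w1 w2 _ w2M].
  rewrite Delta_S // (linear_mxtens_lift (h := mulmx (u *t w1))).
    by apply: eq_mxtens_lift => p q; rewrite tensmx_mul.
  exact: linearP.
have := sweedler_coassoc (Phi := fun w1 p q => (u *m S q) *t (w1 *m S p)) wM.
move=> <-; last by trilinear_tac.
apply: eq_mxtens_lift => w1 w2; rewrite eps_tE.
by rewrite (linear_mxtens_lift (h := tensmx (u *m S w2))) // => c A B; rewrite tensmxPr.
Qed.

Lemma Delta_eps_t_sweedler x : x \in M -> Delta (et x)
  = sweedler (fun u w => sweedler (fun u1 u2 => (u1 *t u2) *m Delta (S w)) u) x.
Proof.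
move=> xM; rewrite eps_tE (linear_mxtens_lift (h := Delta)); last exact: linearP.
apply: (eq_sweedler xM); [bilinear_tac | bilinear_tac | move=> u w uM wM].
rewrite (wk_Delta_mul WK) ?memS // -{1}[Delta u]mxtens_lift_id.
rewrite (linear_mxtens_lift (h := fun X => X *m Delta (S w))) //.
by move=> c A B; rewrite mulmxPl.
Qed.

Lemma sweedler_mulS_eps_t u w : u \in M ->
  sweedler (fun u1 u2 => (u1 *m S w) *t et u2) u = e *m ((u *m S w) *t 1%:M).
Proof.
move=> uM; transitivity (tmap id et (Delta u) *m (S w *t 1%:M)).
  rewrite tmapE (linear_mxtens_lift (h := fun X => X *m (S w *t 1%:M))).
    by apply: eq_mxtens_lift => a b; rewrite (tensmx_mul a (et b)) mulmx1.
  by move=> c A B; rewrite mulmxPl.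
by rewrite id_eps_t_Delta // -mulmxA (tensmx_mul u 1%:M) mul1mx.
Qed.

Lemma Delta_eps_t x : x \in M -> Delta (et x) = e *m (et x *t 1%:M).
Proof.
move=> xM.
have coassoc1 := sweedler_coassoc
  (Phi := fun u1 u2 w => (u1 *t u2) *m Delta (S w)) xM.
have coassoc2 := sweedler_coassoc
  (Phi := fun u w1 w2 => (u *m S w2) *t et w1) xM.
rewrite (Delta_eps_t_sweedler xM) coassoc1; last by trilinear_tac.
transitivity (sweedler (fun u w => sweedler (fun w1 w2 => (u *m S w2) *t et w1) w) x).
  apply: (eq_sweedler xM); [bilinear_tac | bilinear_tac | exact: sweedler_mul_Delta_S].
rewrite -coassoc2; last by trilinear_tac.
transitivity (sweedler (fun u w => e *m ((u *m S w) *t 1%:M)) x).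
  apply: (eq_sweedler xM); [bilinear_tac | bilinear_tac | ].
  by move=> u w uM _; apply: sweedler_mulS_eps_t.
rewrite eps_tE (linear_mxtens_lift (h := fun Y : Mn => e *m (Y *t (1%:M : Mn)))).
  by [].
by move=> c A B; rewrite tensmxPl linearP.
Qed.

Lemma eps_t_adj x : x \in M -> mxadj (et x) = et (S (mxadj x)).
Proof.
move=> xM; have [k [a [b [abM DeltaE]]]] := in_tens_Delta xM.
have mulS_bil : bilinear (fun a b : Mn => a *m S b) by bilinear_tac.
rewrite !eps_tE (Delta_S (mem_adj xM)) (wk_Delta_adj WK xM) DeltaE.
rewrite mxtens_lift_sum // !mxadj_sum (eq_bigr _ (fun i _ => mxadj_tens (a i) (b i))).
rewrite mxtens_lift_sum; last by bilinear_tac.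
rewrite mxtens_lift_sum //; apply: eq_bigr => i _; have [aM bM] := abM i.
by rewrite mxadjM (wk_S_adj WK) // (wk_S_invol WK) // mem_adj.
Qed.

Lemma Delta_eps_t_r x : x \in M -> Delta (et x) = (et x *t 1%:M) *m e.
Proof.
move=> xM; have yM : mxadj (S x) \in M by rewrite mem_adj ?memS.
have -> : et x = mxadj (et (mxadj (S x))).
  by rewrite eps_t_adj // mxadjK (wk_S_invol WK).
rewrite (wk_Delta_adj WK (eps_t_mem yM)) Delta_eps_t // mxadjM mxadj_tens mxadj1.
by rewrite /e_unit -(wk_Delta_adj WK mem1) mxadj1.
Qed.
End WeakKacAlgebra.

Theorem corollary2p1p9 (R : realType) (n : nat) (M : {pred 'M[R[i]]_n})
  (Delta : {linear 'M[R[i]]_n -> 'M[R[i]]_(n * n)})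
  (S : {linear 'M[R[i]]_n -> 'M[R[i]]_n})
  (eps : {linear 'M[R[i]]_n -> R[i]^o}) :
  weak_Kac_algebra Delta S eps M ->
  [/\ eps_t Delta S 1%:M = 1%:M,
      {in M, forall x, in_Nt Delta M (eps_t Delta S x)} &
      forall x, in_Ns Delta M x ->
        tmap id (eps_t Delta S) (Delta x)
        = e_unit Delta *m (x *t (1%:M : 'M[R[i]]_n))].
Proof.
move=> WK; split.
- exact: (eps_t1 WK).
- move=> x xM; split.
  + exact (eps_t_mem WK xM).
  + exact (Delta_eps_t WK xM).
  + exact (Delta_eps_t_r WK xM).
- by move=> x [xM _ _]; exact (id_eps_t_Delta WK xM).
Qed.
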